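(* Let $N\ge 2$ and $m$ be integers, let $v=e^{\pi i/N}$, and for integers $n$ put $\{n\}=v^n-v^{-n}$, $A(j,k)=\{j-k\}\{j+k\}$, $S(k,l)=\prod_{k\le n\le l}\{n\}$ and $S'(k,l)=\prod_{k\le n\le l,\ n\notin\{0,N\}}\{n\}$. For a finite family $(a_i)_{i\in I}$ put ${\prod'_{i\in I}}a_i=\sum_{i\in I}\prod_{r\in I\setminus\{i\}}a_r$. For integers $0\le j\le N-1$, $0\le l\le N-1$ define $$D(j,l)=(v^j+v^{-j})\Big(\prod_{k=1}^lA(j,k)+2\{j\}^2{\prod_{1\le k\le l}}'A(j,k)\Big)+\frac{mj}{2}\{j\}\prod_{k=1}^lA(j,k).$$ Then $D(j,l)=D_1(j,l)+D_2(j,l)$, where $D_1(j,l)=\Big(\frac{mj}{2}+\frac{v^j+v^{-j}}{\{j\}}+2\{2j\}\sum_{k=1}^l\frac{1}{A(j,k)}\Big)S(j-l,j+l)$ if $l<\min(j,N-j)$, and $D_1(j,l)=0$ if $l\ge\min(j,N-j)$; and $D_2(j,l)=2S'(j-l,j+l)$ if $j\le l<N-j$, $D_2(j,l)=-2S'(j-l,j+l)$ if $N-j\le l<j$, and $D_2(j,l)=0$ if $l<\min(j,N-j)$ or $l\ge\max(j,N-j)$. *)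

From mathcomp Require Import all_boot all_order all_algebra all_field.
Set Implicit Arguments. Unset Strict Implicit. Unset Printing Implicit Defensive.
Import Order.TTheory GRing.Theory Num.Theory.
Local Open Scope ring_scope.

(* v = e^{pi i / N}: N.-root (-1) in algC is the N-th root of -1 with minimal
   nonnegative argument, i.e. exp(pi i / N). *)
Definition vv (N : nat) : algC := N.-root (-1).

Definition br (N : nat) (n : int) : algC := vv N ^ n - vv N ^ (- n).

Definition AA (N : nat) (j k : int) : algC := br N (j - k) * br N (j + k).

Definition SS (N : nat) (k l : int) : algC :=
  if k <= l then \prod_(i < (absz (l - k)).+1) br N (k + i%:Z) else 1.

Definition SS' (N : nat) (k l : int) : algC :=
  if k <= l then
    \prod_(i < (absz (l - k)).+1 | (k + i%:Z != 0) && (k + i%:Z != N%:Z))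
      br N (k + i%:Z)
  else 1.

Definition PA (N j l : nat) : algC := \prod_(1 <= k < l.+1) AA N j k.

Definition PA' (N j l : nat) : algC :=
  \sum_(1 <= i < l.+1) \prod_(1 <= r < l.+1 | r != i) AA N j r.

Definition DD (N : nat) (m : int) (j l : nat) : algC :=
  (vv N ^+ j + vv N ^ (- (j%:Z))) * (PA N j l + 2 * (br N j) ^+ 2 * PA' N j l)
  + ((m * j%:Z)%:~R / 2) * br N j * PA N j l.

Definition DD1 (N : nat) (m : int) (j l : nat) : algC :=
  if (l < minn j (N - j))%N then
    ((m * j%:Z)%:~R / 2 + (vv N ^+ j + vv N ^ (- (j%:Z))) / br N j
     + 2 * br N (2 * j%:Z) * \sum_(1 <= k < l.+1) (AA N j k)^-1)
    * SS N (j%:Z - l%:Z) (j%:Z + l%:Z)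
  else 0.

Definition DD2 (N : nat) (j l : nat) : algC :=
  if (j <= l < N - j)%N then 2 * SS' N (j%:Z - l%:Z) (j%:Z + l%:Z)
  else if (N - j <= l < j)%N then - (2 * SS' N (j%:Z - l%:Z) (j%:Z + l%:Z))
  else 0.

From mathcomp Require Import all_boot all_order all_algebra all_field.
From mathcomp Require Import lra ring zify.
Set Implicit Arguments.
Unset Strict Implicit.
Unset Printing Implicit Defensive.

Import Order.TTheory GRing.Theory Num.Theory.
Local Open Scope ring_scope.

(* The identity splits according to which factors A(j,k), 1 <= k <= l, vanish:
   A(j,k) = 0 exactly for k = j and k = N - j.  If none vanishes, the sum of
   partial products is (prod A) * sum 1/A and D(j,l) = D1(j,l); if exactly one
   does, prod A = 0 and the sum of partial products is the product of the other
   factors, which together with {j}{2j} (or {j}{2j - N} = -{j}{2j}) regroups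
   into S'(j-l, j+l); if both do, every term vanishes (for 2j = N via {2j} = 0).
   That {n} != 0 for 0 < n < N means that v is a primitive 2N-th root of unity.
   Since algC only characterises N.-root (-1) as the N-th root of -1 in the
   upper half plane with the largest real part, this is proved by descent: an
   N-th root of -1 that is not an odd power of v, rotated by v^-2, stays such a
   root and has a larger real part. *)

(* In coordinates y = x + i t and w = c + i s of the unit circle, the claim is
   Im w * Im (y / w) > 0. *)
Lemma unit_circle_Im_rot_gt0 (R : realFieldType) (x t c s : R) :
  x ^+ 2 + t ^+ 2 = 1 -> c ^+ 2 + s ^+ 2 = 1 -> 0 <= t -> 0 <= s ->
  (c, s) != (1, 0) -> x <= c -> (x, t) != (c, s) -> 0 < s * (t * c - x * s).
Proof.
move=> xt1 cs1 t_ge0 s_ge0 cs_neq1 x_le_c xt_neq_cs.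
have s_gt0 : 0 < s.
  rewrite lt_neqAle s_ge0 andbT; apply: contra xt_neq_cs => /eqP s0.
  have c_eqN1 : c = -1.
    move: cs_neq1 cs1; rewrite -s0 xpair_eqE eqxx andbT expr0n addr0 => c_neq1.
    by move/eqP; rewrite sqrf_eq1 (negbTE c_neq1) => /eqP.
  have x_eqN1 : x = -1 by nra.
  by rewrite xpair_eqE c_eqN1 x_eqN1 -s0 eqxx /=; apply/eqP; nra.
rewrite pmulr_rgt0 //.
set D := t * c - x * s; set E := x * c + t * s.
have DE1 : D ^+ 2 + E ^+ 2 = 1.
  by rewrite -[1]mulr1 -{1}xt1 -cs1 /D /E; ring.
have x_rot : x = E * c - D * s by rewrite -[x]mulr1 -cs1 /D /E; ring.
have t_rot : t = E * s + D * c by rewrite -[t]mulr1 -cs1 /D /E; ring.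
rewrite ltNge; apply/negP => D_le0.
have D_neq0 : D != 0.
  apply: contra xt_neq_cs => /eqP D0.
  have [E1|EN1] : E = 1 \/ E = -1.
    by move: DE1; rewrite D0 expr0n add0r => /eqP; rewrite sqrf_eq1 => /orP[]/eqP; auto.
  - by rewrite xpair_eqE x_rot t_rot D0 E1 !mul0r !mul1r subr0 addr0 !eqxx.
  - nra.
have D_lt0 : D < 0 by rewrite lt_neqAle D_neq0.
have Ds_le : - D * s <= c * (1 - E) by rewrite x_rot in x_le_c; lra.
have Dc_le : - D * c <= E * s by rewrite t_rot in t_ge0; lra.
have E_lt1 : E < 1 by nra.
have c_gt0 : 0 < c by nra.
have : (- D * s) * (- D * c) <= (c * (1 - E)) * (E * s).
  by apply: ler_pM => //; nra.
nra.
Qed.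

Lemma Re_mul_conj_sqr (C : numClosedFieldType) (y w : C) : `|w| = 1 ->
  'Re (y * w^* ^+ 2) = 'Re y + 2 * ('Im w * 'Im (y * w^*)).
Proof.
move=> w1; apply/eqP; rewrite -subr_eq0; apply/eqP.
rewrite expr2 mulrA !ReM !ImM !Re_conj !Im_conj.
transitivity ('Re y * ('Re w ^+ 2 + 'Im w ^+ 2 - 1)); first by ring.
by rewrite -normC2_Re_Im w1 expr1n subrr mulr0.
Qed.

Lemma Re_lt_mul_conj_sqr (y w : algC) :
  `|y| = 1 -> `|w| = 1 -> 0 <= 'Im y -> 0 <= 'Im w -> w != 1 ->
  'Re y <= 'Re w -> y != w -> 'Re y < 'Re (y * w^* ^+ 2).
Proof.
move=> y1 w1 Imy_ge0 Imw_ge0 w_neq1 Re_le y_neq_w.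
rewrite Re_mul_conj_sqr // ltrDl pmulr_rgt0 ?ltr0n //.
rewrite ImM Re_conj Im_conj mulrN [_ * 'Im y]mulrC.
pose X := in_algR (Creal_Re y); pose T := in_algR (Creal_Im y).
pose Cw := in_algR (Creal_Re w); pose S := in_algR (Creal_Im w).
have unit_circle z (Z1 Z2 : algR) : `|z| = 1 -> algRval Z1 = 'Re z -> algRval Z2 = 'Im z ->
    Z1 ^+ 2 + Z2 ^+ 2 = 1.
  move=> z1 eZ1 eZ2; apply: val_inj.
  change (algRval (Z1 ^+ 2 + Z2 ^+ 2) = algRval 1).
  by rewrite rmorphD !rmorphXn /= eZ1 eZ2 -normC2_Re_Im z1 expr1n.
have neq_rect z z' (Z1 Z2 Z1' Z2' : algR) : algRval Z1 = 'Re z -> algRval Z2 = 'Im z ->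
    algRval Z1' = 'Re z' -> algRval Z2' = 'Im z' -> z != z' -> (Z1, Z2) != (Z1', Z2').
  move=> e1 e2 e1' e2'; apply: contra => /eqP[E1 E2].
  by rewrite eqC -e1 -e2 -e1' -e2' E1 E2 !eqxx.
have := @unit_circle_Im_rot_gt0 _ X T Cw S (unit_circle y X T y1 erefl erefl)
  (unit_circle w Cw S w1 erefl erefl) Imy_ge0 Imw_ge0
  (neq_rect w 1 Cw S 1 0 erefl erefl (esym (Creal_ReP _ (rpred1 _)))
     (esym (Creal_ImP _ (rpred1 _))) w_neq1)
  Re_le (neq_rect y w X T Cw S erefl erefl erefl erefl y_neq_w).
move=> pos; have : 0 < algRval (S * (T * Cw - X * S)) := pos.
by rewrite rmorphM rmorphB !rmorphM addrC.
Qed.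

Lemma exists_max_Re (T : finType) (P : pred T) (f : T -> algC) (i0 : T) :
  P i0 -> exists2 i, P i & forall j, P j -> 'Re (f j) <= 'Re (f i).
Proof.
move=> Pi0; have [i Pi max_i] := @arg_maxP _ _ T i0 P (fun i => in_algR (Creal_Re (f i))) Pi0.
by exists i.
Qed.

Lemma norm_root_neg1 (C : numClosedFieldType) (n : nat) (y : C) :
  (0 < n)%N -> y ^+ n = -1 -> `|y| = 1.
Proof.
move=> n_gt0 yn; apply/eqP; rewrite -(pexpr_eq1 n_gt0) ?normr_ge0 //.
by rewrite -normrX yn normrN normr1.
Qed.

Lemma expr_double_root_neg1 (R : pzRingType) (n : nat) (u : R) :
  u ^+ n = -1 -> u ^+ (2 * n) = 1.
Proof. by move=> un; rewrite mulnC exprM un sqrrN expr1n. Qed.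

Lemma prim_root_half (R : idomainType) (n : nat) (z : R) :
  (2 * n).-primitive_root z -> z ^+ n = -1.
Proof.
move=> z_prim; have n_gt0 : (0 < n)%N by have := prim_order_gt0 z_prim; lia.
apply/eqP; have : (z ^+ n) ^+ 2 == 1 by rewrite -exprM mulnC (prim_expr_order z_prim).
rewrite sqrf_eq1 -(prim_order_dvd z_prim) => /orP[|//].
by move/(dvdn_leq n_gt0); lia.
Qed.

Section RootsOfMinusOne.

Variable N : nat.
Hypothesis N_gt0 : (0 < N)%N.
Local Notation w := (vv N).

Lemma vv_expr_N : w ^+ N = -1.
Proof. exact: rootCK. Qed.

Lemma vv_norm : `|w| = 1.
Proof. exact: norm_root_neg1 vv_expr_N. Qed.

Lemma vv_expr_double_N : w ^+ (2 * N) = 1.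
Proof. exact: expr_double_root_neg1 vv_expr_N. Qed.

Lemma vv_neq0 : w != 0.
Proof. by rewrite -normr_eq0 vv_norm oner_eq0. Qed.

Lemma vv_conj : w^* = w ^+ (2 * N - 1).
Proof.
apply: (mulfI vv_neq0); rewrite -exprS subn1 prednK ?muln_gt0 // vv_expr_double_N.
by rewrite -normCK vv_norm expr1n.
Qed.

Lemma Im_vv_ge0 : 0 <= 'Im w.
Proof.
case: (ltnP 1 N) => [N_gt1 | N_le1]; first exact: Im_rootC_ge0.
have -> : N = 1%N by apply/eqP; rewrite eqn_leq N_le1.
by rewrite /vv root1C raddfN /= (Creal_ImP _ (rpred1 _)) oppr0.
Qed.

Definition odd_vv_power (y : algC) := [exists i : 'I_(2 * N), odd i && (y == w ^+ i)].

Lemma odd_vv_powerP y : reflect (exists2 n, odd n & y = w ^+ n) (odd_vv_power y).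
Proof.
apply: (iffP existsP) => [[i /andP[odd_i /eqP ->]] | [n odd_n ->]]; first by exists i.
have n_mod_lt : (n %% (2 * N) < 2 * N)%N by rewrite ltn_mod muln_gt0.
exists (Ordinal n_mod_lt); rewrite /= odd_mod ?odd_n; last by rewrite oddM.
by rewrite expr_mod ?eqxx //; exact: vv_expr_double_N.
Qed.

Lemma odd_vv_power_conj y : odd_vv_power y -> odd_vv_power y^*.
Proof.
move/odd_vv_powerP => [n odd_n ->]; apply/odd_vv_powerP.
exists ((2 * N - 1) * n)%N; last by rewrite exprM -vv_conj rmorphXn.
by rewrite oddM oddB ?muln_gt0 // oddM odd_n.
Qed.

Lemma odd_vv_power_mul_conj_sqr y : odd_vv_power (y * w^* ^+ 2) -> odd_vv_power y.
Proof.
move/odd_vv_powerP => [n odd_n e]; apply/odd_vv_powerP; exists n.+2; first by rewrite !oddS negbK.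
by rewrite -addn2 exprD -e -mulrA -exprMn [w^* * w]mulrC -normCK vv_norm !expr1n mulr1.
Qed.

Definition root_neg1_nonodd (y : algC) := (y ^+ N == -1) && ~~ odd_vv_power y.

Lemma root_neg1_nonodd_conj y : root_neg1_nonodd y -> root_neg1_nonodd y^*.
Proof.
move=> /andP[/eqP yN nonodd_y]; apply/andP; split.
  by rewrite -rmorphXn yN rmorphN rmorph1.
by apply: contra nonodd_y => /odd_vv_power_conj; rewrite conjCK.
Qed.

Lemma root_neg1_nonodd_rot y : root_neg1_nonodd y -> root_neg1_nonodd (y * w^* ^+ 2).
Proof.
move=> /andP[/eqP yN nonodd_y]; apply/andP; split; last first.
  by apply: contra nonodd_y => /odd_vv_power_mul_conj_sqr.
rewrite exprMn yN -exprM mulnC exprM -rmorphXn vv_expr_N rmorphN rmorph1.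
by rewrite sqrrN expr1n mulr1.
Qed.

Lemma root_neg1_odd_vv_power y : y ^+ N = -1 -> odd_vv_power y.
Proof.
move=> yN; apply: contraT => not_odd_y.
have N2_gt0 : (0 < 2 * N)%N by rewrite muln_gt0.
have [z z_prim] := C_prim_root_exists N2_gt0.
have [i0 ez0] := prim_rootP z_prim (expr_double_root_neg1 yN).
have nonodd_i0 : root_neg1_nonodd (z ^+ i0) by rewrite -ez0 /root_neg1_nonodd yN eqxx.
have [i nonodd_y0 max_i] := @exists_max_Re _ (fun i : 'I_(2 * N) => root_neg1_nonodd (z ^+ i))
  (fun i => z ^+ i) i0 nonodd_i0.
set y0 := z ^+ i in nonodd_y0 max_i.
have max_y0 u : root_neg1_nonodd u -> 'Re u <= 'Re y0.
  move=> nonodd_u; have /andP[/eqP uN _] := nonodd_u.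
  have [j eu] := prim_rootP z_prim (expr_double_root_neg1 uN).
  by rewrite eu in nonodd_u *; apply: max_i.
have [y1 [nonodd_y1 Re_y1 Im_y1]] :
    exists y1, [/\ root_neg1_nonodd y1, 'Re y1 = 'Re y0 & 0 <= 'Im y1].
  have [Im_ge0 | Im_lt0] := boolP (0 <= 'Im y0); first by exists y0.
  exists y0^*; split; rewrite ?Re_conj ?root_neg1_nonodd_conj // Im_conj oppr_ge0 ltW //.
  by rewrite real_ltNge ?real0 ?Creal_Im.
have y1_N : y1 ^+ N = -1 by case/andP: nonodd_y1 => /eqP.
have y1_neq_w : y1 != w.
  apply: contraNneq (andP nonodd_y1).2 => ->.
  by apply/odd_vv_powerP; exists 1%N; rewrite ?expr1.
have w_neq1 : w != 1.
  by apply/eqP => w1; move/eqP: vv_expr_N; rewrite w1 expr1n eq_sym eqNr oner_eq0.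
have := Re_lt_mul_conj_sqr (norm_root_neg1 N_gt0 y1_N) vv_norm Im_y1 Im_vv_ge0
  w_neq1 (rootC_Re_max N_gt0 y1_N Im_y1) y1_neq_w.
by move/lt_geF; rewrite Re_y1 max_y0 ?root_neg1_nonodd_rot.
Qed.

Lemma vv_prim_root : (2 * N).-primitive_root w.
Proof.
have N2_gt0 : (0 < 2 * N)%N by rewrite muln_gt0.
have [z z_prim] := C_prim_root_exists N2_gt0.
have /odd_vv_powerP[n _ ez] := root_neg1_odd_vv_power (prim_root_half z_prim).
have [d w_prim d_dvd] := prim_order_exists N2_gt0 vv_expr_double_N.
suff dE : d = (2 * N)%N by rewrite -dE.
apply/eqP; rewrite eqn_dvd d_dvd /= (prim_order_dvd z_prim) ez.
by rewrite -exprM mulnC exprM (prim_expr_order w_prim) expr1n.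
Qed.

End RootsOfMinusOne.

Lemma br_nat N (n : nat) : br N n = vv N ^+ n - (vv N ^+ n)^-1.
Proof. by rewrite /br -exprnN exprnP. Qed.

Lemma br0 N : br N 0 = 0.
Proof. by rewrite /br oppr0 subrr. Qed.

Lemma br_N N : (0 < N)%N -> br N N = 0.
Proof. by move=> N_gt0; rewrite br_nat vv_expr_N // invrN invr1 opprK addNr. Qed.

Lemma br_subN N (n : int) : (0 < N)%N -> br N (n - N%:Z) = - br N n.
Proof.
move=> N_gt0; have w_neq0 := vv_neq0 N_gt0.
rewrite /br opprB !expfzDr // -exprnN -exprnP vv_expr_N // invrN invr1.
by rewrite mulrN1 mulN1r opprK opprB addrC.
Qed.

Lemma br_double N (j : nat) : (0 < N)%N ->
  (vv N ^+ j + vv N ^ (- (j%:Z))) * br N j = br N (2 * j%:Z).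
Proof.
move=> N_gt0; have wj_neq0 : vv N ^+ j != 0 by rewrite expf_neq0 // vv_neq0.
by rewrite -PoszM !br_nat -exprnN mulnC exprM; field.
Qed.

Lemma br_neq0 N (n : nat) : (0 < n < N)%N -> br N n != 0.
Proof.
move=> /andP[n_gt0 n_ltN]; have N_gt0 := ltn_trans n_gt0 n_ltN.
have wn_neq0 : vv N ^+ n != 0 by rewrite expf_neq0 // vv_neq0.
rewrite br_nat subr_eq0; apply/negP => /eqP wn.
have : vv N ^+ (2 * n) == 1 by rewrite mulnC exprM expr2 {1}wn mulVf.
rewrite -(prim_order_dvd (vv_prim_root N_gt0)) dvdn_pmul2l //.
by move/(dvdn_leq n_gt0); rewrite leqNgt n_ltN.
Qed.

Lemma prod_centered (R : comPzRingType) (f : int -> R) (c : int) (l : nat) :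
  \prod_(i < (absz ((c + l%:Z) - (c - l%:Z))%R).+1) f (c - l%:Z + i%:Z)
  = f c * \prod_(1 <= k < l.+1) (f (c - k%:Z) * f (c + k%:Z)).
Proof.
have -> : absz ((c + l%:Z) - (c - l%:Z))%R = (l + l)%N by lia.
elim: l => [|l IHl]; first by rewrite big_ord1 big_geq // mulr1 subr0 addr0.
rewrite addSn addnS big_ord_recl big_ord_recr /=.
under eq_bigr => i _ do have -> : c - l.+1%:Z + (bump 0 i)%:Z = c - l%:Z + i%:Z by rewrite /bump; lia.
have -> : c - l.+1%:Z + (bump 0 (l + l).+1)%:Z = c + l.+1%:Z by rewrite /bump; lia.
rewrite IHl [in RHS]big_nat_recr //= addr0; ring.
Qed.

Lemma SS_centered N (j l : nat) :
  SS N (j%:Z - l%:Z) (j%:Z + l%:Z) = br N j * PA N j l.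
Proof. by rewrite /SS ifT ?prod_centered //; lia. Qed.

Definition br' N (n : int) : algC := if (n != 0) && (n != N%:Z) then br N n else 1.

Lemma SS'_centered N (j l : nat) : SS' N (j%:Z - l%:Z) (j%:Z + l%:Z) =
  br' N j * \prod_(1 <= k < l.+1) (br' N (j%:Z - k%:Z) * br' N (j%:Z + k%:Z)).
Proof. by rewrite /SS' ifT; [rewrite big_mkcond -(prod_centered (br' N)) | lia]. Qed.

Lemma sum_prod_others_nz (R : fieldType) (I : eqType) (r : seq I) (F : I -> R) :
  uniq r -> {in r, forall i, F i != 0} ->
  \sum_(i <- r) \prod_(k <- r | k != i) F k = (\prod_(k <- r) F k) * \sum_(i <- r) (F i)^-1.
Proof.
move=> r_uniq F_neq0; rewrite mulr_sumr; apply: eq_big_seq => i ri.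
by rewrite (bigD1_seq i) //= mulrAC mulfV ?mul1r ?F_neq0.
Qed.

Lemma sum_prod_others_zero (R : comPzSemiRingType) (I : eqType) (r : seq I) (F : I -> R) i0 :
  uniq r -> i0 \in r -> F i0 = 0 ->
  \sum_(i <- r) \prod_(k <- r | k != i) F k = \prod_(k <- r | k != i0) F k.
Proof.
move=> r_uniq ri0 Fi0; rewrite [LHS](bigD1_seq i0) //= [X in _ + X]big1 ?addr0 // => i i_neq0.
by rewrite big_mkcond (bigD1_seq i0) //= eq_sym i_neq0 Fi0 mul0r.
Qed.

Lemma br'E N (n : int) : n != 0 -> n != N%:Z -> br' N n = br N n.
Proof. by rewrite /br' => -> ->. Qed.

Lemma br'0 N : br' N 0 = 1.
Proof. by rewrite /br' eqxx. Qed.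

Lemma br'N N : br' N N = 1.
Proof. by rewrite /br' eqxx andbF. Qed.

Lemma AA_diag N j : AA N j j = 0.
Proof. by rewrite /AA subrr br0 mul0r. Qed.

Lemma AA_compl N (j : nat) : (0 < N)%N -> (j <= N)%N -> AA N j (N - j)%N = 0.
Proof.
by move=> N_gt0 j_le; rewrite /AA (_ : j%:Z + (N - j)%N%:Z = N%:Z) ?br_N ?mulr0 //; lia.
Qed.

Lemma AA_neq0 N (j k : nat) : (0 < k < j)%N -> (j + k < N)%N -> AA N j k != 0.
Proof.
move=> k_range jk_lt; rewrite mulf_neq0 //.
  by rewrite (_ : j%:Z - k%:Z = (j - k)%N%:Z) ?br_neq0 //; lia.
by rewrite (_ : j%:Z + k%:Z = (j + k)%N%:Z) ?br_neq0 //; lia.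
Qed.

Lemma br'_AA N (j k : nat) : (j < N)%N -> (0 < k < N)%N -> k != j -> (j + k != N)%N ->
  br' N (j%:Z - k%:Z) * br' N (j%:Z + k%:Z) = AA N j k.
Proof. by move=> *; rewrite !br'E //; lia. Qed.

Lemma DD_PA_eq0 N m j l : (0 < N)%N -> PA N j l = 0 ->
  DD N m j l = 2 * br N j * br N (2 * j%:Z) * PA' N j l.
Proof. by move=> N_gt0 PA0; rewrite /DD PA0 -br_double //; ring. Qed.

Section Regimes.

Variables (N : nat) (m : int) (j l : nat).
Hypotheses (N_gt0 : (0 < N)%N) (j_ltN : (j < N)%N) (l_ltN : (l < N)%N).

Lemma DD_small : (l < minn j (N - j))%N ->
  DD N m j l = ((m * j%:Z)%:~R / 2 + (vv N ^+ j + vv N ^ (- (j%:Z))) / br N j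
     + 2 * br N (2 * j%:Z) * \sum_(1 <= k < l.+1) (AA N j k)^-1)
    * SS N (j%:Z - l%:Z) (j%:Z + l%:Z).
Proof.
move=> l_small.
have A_neq0 : {in index_iota 1 l.+1, forall k : nat, AA N j k != 0}.
  by move=> k; rewrite mem_index_iota => k_range; apply: AA_neq0; lia.
have brj_neq0 : br N j != 0 by apply: br_neq0; lia.
rewrite /DD /PA' (sum_prod_others_nz (iota_uniq _ _) A_neq0) -/(PA N j l).
by rewrite SS_centered -br_double //; field.
Qed.

Lemma PA_eq0 k0 : (0 < k0 <= l)%N -> AA N j k0 = 0 -> PA N j l = 0.
Proof.
move=> k0_range A0; apply/eqP; rewrite prodf_seq_eq0; apply/hasP.
by exists k0; rewrite /= ?mem_index_iota ?A0 ?eqxx //; lia.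
Qed.

Lemma PA'_single_zero k0 : (0 < k0 <= l)%N -> AA N j k0 = 0 ->
  PA' N j l = \prod_(1 <= k < l.+1 | k != k0) AA N j k.
Proof.
move=> k0_range A0; rewrite /PA' (sum_prod_others_zero (iota_uniq _ _) _ A0) //.
by rewrite mem_index_iota; lia.
Qed.

Lemma SS'_split k0 : (0 < k0 <= l)%N ->
  (forall k, (0 < k <= l)%N -> k != k0 -> (k != j) && (j + k != N)%N) ->
  SS' N (j%:Z - l%:Z) (j%:Z + l%:Z) = br' N j * (br' N (j%:Z - k0%:Z) * br' N (j%:Z + k0%:Z)
    * \prod_(1 <= k < l.+1 | k != k0) AA N j k).
Proof.
move=> k0_range others; rewrite SS'_centered (bigD1_seq k0) ?iota_uniq ?mem_index_iota //=.
congr (_ * (_ * _)); apply: congr_big_nat => // k /andP[k_neq k_range].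
have /andP[? ?] : (k != j) && (j + k != N)%N by apply: others => //; lia.
by apply: br'_AA => //; lia.
Qed.

Lemma DD_left : (j <= l < N - j)%N -> DD N m j l = 2 * SS' N (j%:Z - l%:Z) (j%:Z + l%:Z).
Proof.
move=> l_left; have [j0|j_gt0] := posnP j.
  rewrite j0 SS'_centered br'0 mul1r /DD br0 expr0n /= oppr0 expr0 expr0z.
  rewrite !(mul0r, mulr0, addr0); congr (_ * _); apply: eq_big_nat => k k_range.
  by rewrite br'_AA //; lia.
have j_range : (0 < j <= l)%N by lia.
rewrite DD_PA_eq0 ?(PA_eq0 j_range (AA_diag N j)) // (PA'_single_zero j_range (AA_diag N j)).
rewrite (SS'_split j_range); last by move=> k *; apply/andP; split; lia.
have -> : j%:Z + j%:Z = 2 * j%:Z by lia.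
rewrite subrr br'0 mul1r !br'E; try by lia.
by rewrite !mulrA.
Qed.

Lemma DD_right : (N - j <= l < j)%N -> DD N m j l = - (2 * SS' N (j%:Z - l%:Z) (j%:Z + l%:Z)).
Proof.
move=> l_right; have k0_range : (0 < N - j <= l)%N by lia.
have A0 := AA_compl N_gt0 (ltnW j_ltN).
rewrite DD_PA_eq0 ?(PA_eq0 k0_range A0) // (PA'_single_zero k0_range A0).
rewrite (SS'_split k0_range); last by move=> k *; apply/andP; split; lia.
have -> : j%:Z + (N - j)%N%:Z = N%:Z by lia.
have -> : j%:Z - (N - j)%N%:Z = 2 * j%:Z - N%:Z by lia.
rewrite br'N mulr1 !br'E ?br_subN //; try by lia.
by rewrite mulNr !mulrN opprK !mulrA.
Qed.

Lemma DD_large : (j <= l)%N -> (N - j <= l)%N -> DD N m j l = 0.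
Proof.
move=> j_le_l Nj_le_l; have j_range : (0 < j <= l)%N by lia.
rewrite DD_PA_eq0 ?(PA_eq0 j_range (AA_diag N j)) // (PA'_single_zero j_range (AA_diag N j)).
have [jj|jj] := eqVneq (j + j)%N N.
  by rewrite (_ : 2 * j%:Z = N%:Z) ?br_N ?mulr0 ?mul0r //; lia.
rewrite (_ : \prod_(_ <= k < _ | _) _ = 0) ?mulr0 //; apply/eqP; rewrite prodf_seq_eq0.
apply/hasP; exists (N - j)%N; first by rewrite mem_index_iota; lia.
by rewrite AA_compl ?eqxx ?andbT //; [apply/eqP; lia | apply: ltnW].
Qed.

End Regimes.

Theorem lemma2p3 (N : nat) (m : int) (j l : nat) :
  (2 <= N)%N -> (j <= N - 1)%N -> (l <= N - 1)%N ->
  DD N m j l = DD1 N m j l + DD2 N j l.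
Proof.
move=> N_ge2 j_le l_le.
have N_gt0 : (0 < N)%N by lia.
have j_ltN : (j < N)%N by lia.
have l_ltN : (l < N)%N by lia.
rewrite /DD1 /DD2; case: ifP => [l_small | /negbT l_not_small].
  by rewrite (DD_small m) // !ifF ?addr0 //; lia.
rewrite add0r; case: ifP => [l_left | /negbT l_not_left]; first by apply: DD_left.
case: ifP => [l_right | /negbT l_not_right]; first by apply: DD_right.
by apply: DD_large => //; lia.
Qed.
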